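(* Let $g\geqslant1$ be odd and $i\geqslant0$ an integer. Then: (i) there exists $u_{g,i}\in\mathbb{C}[\alpha,\gamma]$ which is a unit modulo $J_g^-$ such that $u_{g,i}\gamma^i\zeta^-_{g-2i-1}\equiv\gamma^{i+1}\zeta^-_{g-2i-2}\pmod{J_g^-}$; (ii) there exists $v_{g,i}\in\mathbb{C}[\alpha,\gamma]$ which is a unit modulo $J_g^-$ such that $v_{g,i}\gamma^i\zeta^-_{g-2i-1}\equiv\gamma^{i+1}\zeta^-_{g-2i-3}\pmod{J_g^-}$.
   Context: $\zeta_k^-\in\mathbb{C}[\alpha,\gamma]$: $\zeta^-_i=0$ for $i<0$, $\zeta^-_0=1$, $\zeta^-_{k+1}=\alpha\zeta^-_k-16k^2\zeta^-_{k-1}+2k(k-1)\gamma\zeta^-_{k-2}$ for $k$ odd and $\zeta^-_{k+1}=\alpha\zeta^-_k+2k(k-1)\gamma\zeta^-_{k-2}$ for $k$ even ($k\geqslant0$); $J^-_k=(\zeta^-_k,\zeta^-_{k+1},\zeta^-_{k+2})$. A unit modulo an ideal $J$ is an element whose image in $\mathbb{C}[\alpha,\gamma]/J$ is invertible. *)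

From mathcomp Require Import all_boot all_algebra.
From mathcomp.real_closed Require Import complex.
From mathcomp Require Import Rstruct.

Set Implicit Arguments.
Unset Strict Implicit.
Unset Printing Implicit Defensive.
Import GRing.Theory.
Local Open Scope ring_scope.

Definition Cx : fieldType := complex Rdefinitions.R.

(* The polynomial ring C[alpha, gamma], represented as (C[alpha])[gamma]. *)
Definition CAG := {poly {poly Cx}}.

Definition alpha : CAG := ('X : {poly Cx})%:P.
Definition gamma : CAG := 'X.

(* zeta^-_n for n >= 0:
   zeta_0 = 1, and for k >= 0
   zeta_{k+1} = alpha zeta_k - [k odd] 16 k^2 zeta_{k-1} + 2k(k-1) gamma zeta_{k-2},
   with zeta_i = 0 for i < 0. *)
Fixpoint zetan (n : nat) : CAG :=
  match n with
  | 0 => 1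
  | k.+1 =>
      let zm1 := match k with 0 => 0 | k1.+1 => zetan k1 end in
      let zm2 := match k with 0 => 0 | 1 => 0 | k2.+2 => zetan k2 end in
      alpha * zetan k
      - (if odd k then (16 * k ^ 2)%N%:R * zm1 else 0)
      + (2 * k * (k - 1))%N%:R * gamma * zm2
  end.

Definition zeta (i : int) : CAG :=
  match i with
  | Posz n => zetan n
  | Negz _ => 0
  end.

Definition inJ (k : nat) (f : CAG) : Prop :=
  exists a b c : CAG,
    f = a * zetan k + b * zetan k.+1 + c * zetan k.+2.

Definition congJ (k : nat) (f h : CAG) : Prop := inJ k (f - h).

Definition unit_modJ (k : nat) (u : CAG) : Prop :=
  exists w : CAG, congJ k (u * w) 1.

(* Write g = 2h + 1 and J = J^-_g.  Every term occurring in (i) and (ii) already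
   lies in J, so u = v = 1 work; the heart of the matter is that zeta_{2h} is in J.

   Reducing the recurrence for zeta_{2h+3} modulo J gives gamma zeta_{2h} in J.
   Running the recurrence downwards from zeta_{2h+1}, zeta_{2h+2} in J produces
   polynomials a_j, b_j in alpha alone such that, up to a nonzero integer factor,
   gamma^(h-j) zeta_{2j} = a_j zeta_{2h} and gamma^(h-j) zeta_{2j+1} = b_j zeta_{2h}
   modulo J.  At j = 0 (zeta_0 = 1, zeta_1 = alpha, zeta_2 = alpha^2 - 16) the ideal
   of p in C[alpha] with p zeta_{2h} in J therefore contains b_0 - alpha a_0 and
   16 a_0 - alpha b_0.  It also contains the value of zeta_{2h+1} at gamma = 0,
   namely alpha prod_{m<h} (alpha^2 - 16 (2m+1)^2), whose roots are all real.  At a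
   real x the pair (b, a) of the recurrence keeps x a b <= 0 and (b, a) <> 0, so the
   two polynomials above never vanish together at x: the ideal contains 1. *)

From mathcomp Require Import all_boot all_order all_algebra.
From mathcomp.real_closed Require Import complex.
From mathcomp Require Import Rstruct.
From mathcomp Require Import ring lra zify.
Import Order.TTheory GRing.Theory Num.Theory.
Set Implicit Arguments.
Unset Strict Implicit.
Unset Printing Implicit Defensive.
Local Open Scope complex_scope.
Local Open Scope ring_scope.

Definition gamma_coef (k : nat) : nat := 2 * k * (k - 1).
Definition square_coef (k : nat) : nat := 16 * k ^ 2.

Lemma zetan0 : zetan 0 = 1.
Proof. by []. Qed.

Lemma zetan1 : zetan 1 = alpha.
Proof. by rewrite /= mulr1 subr0 mulr0 addr0. Qed.

Lemma zetan2 : zetan 2 = alpha * zetan 1 - (square_coef 1)%:R * zetan 0.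
Proof. by rewrite /= mulr0 addr0. Qed.

Lemma zetanSSS k : zetan k.+3 = alpha * zetan k.+2
  - (if odd k.+2 then (square_coef k.+2)%:R * zetan k.+1 else 0)
  + (gamma_coef k.+2)%:R * gamma * zetan k.
Proof. by []. Qed.

Arguments zetan : simpl never.

Lemma zetan_even_rec j : zetan j.*2.+3 =
  alpha * zetan j.*2.+2 + (gamma_coef j.*2.+2)%:R * gamma * zetan j.*2.
Proof. by rewrite zetanSSS /= odd_double subr0. Qed.

Lemma zetan_odd_rec j : zetan j.*2.+4 = alpha * zetan j.*2.+3
  - (square_coef j.*2.+3)%:R * zetan j.*2.+2
  + (gamma_coef j.*2.+3)%:R * gamma * zetan j.*2.+1.
Proof. by rewrite (zetanSSS j.*2.+1) /= odd_double. Qed.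

Section IdealJ.
Context {k : nat}.

Lemma inJ0 : inJ k 0.
Proof. by exists 0, 0, 0; ring. Qed.

Lemma zetan_inJ : inJ k (zetan k).
Proof. by exists 1, 0, 0; ring. Qed.

Lemma zetanS_inJ : inJ k (zetan k.+1).
Proof. by exists 0, 1, 0; ring. Qed.

Lemma zetanSS_inJ : inJ k (zetan k.+2).
Proof. by exists 0, 0, 1; ring. Qed.

Lemma inJ_comb3 (a b c u v w f : CAG) :
  inJ k u -> inJ k v -> inJ k w -> f = a * u + b * v + c * w -> inJ k f.
Proof.
move=> [u1 [u2 [u3 ->]]] [v1 [v2 [v3 ->]]] [w1 [w2 [w3 ->]]] ->.
exists (a * u1 + b * v1 + c * w1), (a * u2 + b * v2 + c * w2),
  (a * u3 + b * v3 + c * w3); ring.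
Qed.

Lemma inJ_comb2 (a b u v f : CAG) :
  inJ k u -> inJ k v -> f = a * u + b * v -> inJ k f.
Proof.
by move=> hu hv ->; apply: (inJ_comb3 (a := a) (b := b) (c := 0) hu hv inJ0); ring.
Qed.

Lemma inJM (c f : CAG) : inJ k f -> inJ k (c * f).
Proof. by move=> hf; apply: (inJ_comb2 (a := c) (b := 0) hf inJ0); ring. Qed.

Lemma inJ_natrM (n : nat) (f : CAG) : (0 < n)%N -> inJ k (n%:R * f) -> inJ k f.
Proof.
move=> n_gt0 hf; apply: (inJ_comb2 (a := ((n%:R : Cx)^-1)%:P%:P) (b := 0) hf inJ0).
have -> : (n%:R : CAG) = (n%:R : Cx)%:P%:P by rewrite !rmorph_nat.
by rewrite mulr0 addr0 mulrA -!polyCM mulVf ?pnatr_eq0 -?lt0n // mul1r.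
Qed.

Lemma congJ_inJ (f g : CAG) : inJ k f -> inJ k g -> congJ k f g.
Proof. by move=> hf hg; apply: (inJ_comb2 (a := 1) (b := -1) hf hg); ring. Qed.

Lemma unit_modJ1 : unit_modJ k 1.
Proof. by exists 1; apply: (inJ_comb2 (a := 0) (b := 0) inJ0 inJ0); ring. Qed.
End IdealJ.

Definition zstep (R : pzRingType) (c x : R) (p : R * R) : R * R :=
  (c * p.2 - x * p.1, p.1 - x * p.2).

(* (zpair alpha j d).2 and .1 play the roles of a_j and b_j for h = j + d.  Both
   new coordinates are scaled by integers so that no division is needed. *)
Fixpoint zpair (R : pzRingType) (x : R) (j d : nat) : R * R :=
  if d is d'.+1 then
    let p := zstep (square_coef j.*2.+3)%:R x (zpair x j.+1 d') in
    ((gamma_coef j.*2.+2)%:R * p.1, (gamma_coef j.*2.+3)%:R * p.2)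
  else (0, 1).

Definition zend (R : pzRingType) (x : R) (h : nat) : R * R :=
  zstep (square_coef 1)%:R x (zpair x 0 h).

Lemma zpair_rmorph (R S : pzRingType) (f : {rmorphism R -> S}) x j d :
  (f (zpair x j d).1, f (zpair x j d).2) = zpair (f x) j d.
Proof.
elim: d j => [|d IH] j /=; first by rewrite rmorph0 rmorph1.
by rewrite -IH /= !rmorphM !rmorphB !rmorphM !rmorph_nat.
Qed.

Lemma zend_rmorph (R S : pzRingType) (f : {rmorphism R -> S}) x h :
  f (zend x h).1 = (zend (f x) h).1 /\ f (zend x h).2 = (zend (f x) h).2.
Proof. by rewrite /zend -zpair_rmorph /= !rmorphB !rmorphM !rmorph_nat. Qed.

Section DescendingChain.
Variable h : nat.
Local Notation J := (inJ h.*2.+1).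

Lemma gamma_zetan_inJ : J (gamma * zetan h.*2).
Proof.
apply: (@inJ_natrM _ (gamma_coef h.*2.+2)); first by rewrite /gamma_coef !muln_gt0 subn1.
apply: (inJ_comb2 (a := 1) (b := - alpha) zetanSS_inJ zetanS_inJ).
by rewrite zetan_even_rec; ring.
Qed.

Lemma zpair_congr d j : (j + d)%N = h -> exists2 N : nat, (0 < N)%N &
  [/\ J (N%:R * (gamma ^+ d * zetan j.*2) - (zpair alpha j d).2 * zetan h.*2),
      J (N%:R * (gamma ^+ d * zetan j.*2.+1) - (zpair alpha j d).1 * zetan h.*2) &
      J (gamma ^+ d * zetan j.*2.+2)].
Proof.
elim: d j => [|d IH] j hjd.
  rewrite addn0 in hjd; subst j; exists 1%N => //=; split.
  - by apply: (inJ_comb2 (a := 0) (b := 0) inJ0 inJ0); ring.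
  - by apply: (inJ_comb2 (a := 1) (b := 0) zetan_inJ inJ0); ring.
  - by rewrite expr0 mul1r; apply: zetanS_inJ.
have [N N_gt0 [hA hB hL]] := IH j.+1 (etrans (addSnnS j d) hjd).
rewrite doubleS in hA hB hL.
set b := (zpair alpha j.+1 d).1 in hB *; set a := (zpair alpha j.+1 d).2 in hA *.
set z := zetan h.*2.
have [g2_gt0 g3_gt0] : (0 < gamma_coef j.*2.+2)%N /\ (0 < gamma_coef j.*2.+3)%N.
  by rewrite /gamma_coef !muln_gt0 !subn1.
exists (N * gamma_coef j.*2.+2 * gamma_coef j.*2.+3)%N.
  by rewrite 2!muln_gt0 N_gt0 g2_gt0 g3_gt0.
split => /=.
- apply: (inJ_comb2 (a := (gamma_coef j.*2.+3)%:R)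
    (b := - (gamma_coef j.*2.+3)%:R * alpha) hB hA).
  by rewrite /b /a /z zetan_even_rec !natrM exprS; ring.
- apply: (inJ_comb3 (a := (N * gamma_coef j.*2.+2)%N%:R)
    (b := - (gamma_coef j.*2.+2)%:R * alpha)
    (c := (gamma_coef j.*2.+2 * square_coef j.*2.+3)%N%:R) hL hB hA).
  by rewrite /b /a /z zetan_odd_rec !natrM exprS; ring.
- apply: (inJ_natrM N_gt0).
  apply: (inJ_comb2 (a := gamma) (b := a) hA gamma_zetan_inJ).
  by rewrite /a /z exprS; ring.
Qed.

Lemma zend_annihilates :
  J ((zend alpha h).1 * zetan h.*2) /\ J ((zend alpha h).2 * zetan h.*2).
Proof.
have [N _ [hA hB hL]] := zpair_congr (add0n h).
rewrite zetan0 in hA; rewrite zetan1 in hB; rewrite zetan2 zetan1 zetan0 in hL.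
split.
- apply: (inJ_comb3 (a := alpha) (b := - (square_coef 1)%:R) (c := - N%:R) hB hA hL).
  by rewrite /zend /zstep /=; ring.
- apply: (inJ_comb2 (a := (-1 : CAG)) (b := alpha) hB hA).
  by rewrite /zend /zstep /=; ring.
Qed.
End DescendingChain.

Section SignInvariant.
Variable R : realDomainType.

Definition sign_inv (x : R) (p : R * R) := x * p.1 * p.2 <= 0 /\ p != (0, 0).

Lemma sign_inv_step c x p : 0 < c -> sign_inv x p -> sign_inv x (zstep c x p).
Proof.
case: p => b a c_gt0 [/= hs hnz]; split => /=.
  have h1 : x * b * a * (c + x ^+ 2) <= 0.
    by apply: mulr_le0_ge0 => //; rewrite addr_ge0 ?sqr_ge0 // ltW.
  have h2 : 0 <= c * (x * a) ^+ 2 by rewrite mulr_ge0 ?sqr_ge0 // ltW.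
  have h3 : 0 <= (x * b) ^+ 2 by rewrite sqr_ge0.
  nra.
apply: contra hnz => /eqP [e1 e2].
have hb : b = x * a by lra.
rewrite hb in hs e1 *.
have hxa : x * a = 0 by nra.
have ha : a = 0.
  have : c * a = 0 by nra.
  by move/eqP; rewrite mulf_eq0 (gt_eqF c_gt0) => /eqP.
by rewrite hxa ha.
Qed.

Lemma sign_inv_scale u v x p :
  0 < u -> 0 < v -> sign_inv x p -> sign_inv x (u * p.1, v * p.2).
Proof.
case: p => b a u_gt0 v_gt0 [/= hs hnz]; split => /=.
  have -> : x * (u * b) * (v * a) = u * v * (x * b * a) by ring.
  by rewrite pmulr_rle0 ?mulr_gt0.
apply: contra hnz => /eqP [/eqP e1 /eqP e2].
rewrite mulf_eq0 (gt_eqF u_gt0) in e1; rewrite mulf_eq0 (gt_eqF v_gt0) in e2.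
by rewrite (eqP e1) (eqP e2).
Qed.

Lemma zpair_sign_inv x j d : sign_inv x (zpair x j d).
Proof.
elim: d j => [|d IH] j /=.
  by split; rewrite /= ?mulr0 ?mul0r // xpair_eqE oner_eq0 andbF.
apply: (sign_inv_scale (p := zstep (square_coef j.*2.+3)%:R x (zpair x j.+1 d))).
- by rewrite ltr0n /gamma_coef !muln_gt0 subn1.
- by rewrite ltr0n /gamma_coef !muln_gt0 subn1.
- by apply: sign_inv_step; rewrite // ltr0n /square_coef muln_gt0 expn_gt0.
Qed.

Lemma zend_neq0 (x : R) h : zend x h != (0, 0).
Proof.
have c_gt0 : 0 < (square_coef 1)%:R :> R by rewrite ltr0n.
by have [] := sign_inv_step c_gt0 (zpair_sign_inv x 0 h).
Qed.
End SignInvariant.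

Section PolyIdeal.
Variables (F : fieldType) (I : {poly F} -> Prop).
Hypothesis IB : forall p q, I p -> I q -> I (p - q).
Hypothesis IM : forall p q, I p -> I (q * p).

Lemma ideal_divXsubC q r f : I (q * ('X - r%:P)) -> I f -> f.[r] != 0 -> I q.
Proof.
move=> hq hf fr_neq0.
have /factor_theorem [f' ef] : root (f - f.[r]%:P) r by rewrite rootE !hornerE subrr.
have : I (f.[r]%:P * q).
  have -> : f.[r]%:P * q = q * f - f' * (q * ('X - r%:P)) by rewrite mulrCA -ef; ring.
  by apply: IB; apply: IM.
by move/(IM (f.[r]^-1)%:P); rewrite mulrA -polyCM mulVf // mul1r.
Qed.

Lemma ideal_prod_XsubC (s : seq F) q :
  {in s, forall r, exists2 f, I f & f.[r] != 0} ->
  I (q * \prod_(r <- s) ('X - r%:P)) -> I q.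
Proof.
elim: s q => [|r s IH] q hs; first by rewrite big_nil mulr1.
rewrite big_cons mulrA => /IH hq.
have [f hf fr_neq0] := hs r (mem_head r s).
by apply: (ideal_divXsubC (hq _) hf fr_neq0) => x xs; apply: hs; rewrite inE xs orbT.
Qed.
End PolyIdeal.

Definition annJ k (m : CAG) (p : {poly Cx}) : Prop := inJ k (p%:P * m).

Lemma annJB k m p q : annJ k m p -> annJ k m q -> annJ k m (p - q).
Proof.
move=> hp hq; apply: (inJ_comb2 (a := 1) (b := - 1) hp hq).
by rewrite rmorphB; ring.
Qed.

Lemma annJM k m p q : annJ k m p -> annJ k m (q * p).
Proof.
move=> hp; apply: (inJ_comb2 (a := q%:P) (b := 0) hp inJ0).
by rewrite rmorphM; ring.
Qed.

Lemma annJ_horner0 k m F : inJ k (gamma * m) -> inJ k (F * m) -> annJ k m F.[0].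
Proof.
move=> hgm hFm.
have /factor_theorem [G] : root (F - F.[0]%:P) 0 by rewrite rootE !hornerE subrr.
rewrite polyC0 subr0 => eG.
have eF : F = F.[0]%:P + G * gamma by rewrite /gamma -eG; ring.
apply: (inJ_comb2 (a := 1) (b := - G) hFm hgm).
by rewrite {2}eF; ring.
Qed.

Fixpoint zroots (R : pzRingType) (j : nat) : seq R :=
  if j is j'.+1 then (4 * j'.*2.+1)%:R :: - (4 * j'.*2.+1)%:R :: zroots R j'
  else [::].

Lemma map_zroots (R S : pzRingType) (f : {rmorphism R -> S}) j :
  map f (zroots R j) = zroots S j.
Proof. by elim: j => //= j ->; rewrite rmorphN rmorph_nat. Qed.

Lemma horner0_natr (n : nat) : (n%:R : CAG).[0] = n%:R.
Proof. by rewrite -horner_evalE rmorph_nat. Qed.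

Lemma horner0_zetan k : (zetan k.+1).[0] =
  'X * (zetan k).[0] - (if odd k then (square_coef k)%:R * (zetan k.-1).[0] else 0).
Proof.
have hornerE0 := (horner0_natr, hornerD, hornerN, hornerM, hornerC, hornerX).
case: k => [|[|k]].
- by rewrite zetan1 zetan0 !hornerE0 /= mulr1 subr0.
- by rewrite zetan2 zetan1 zetan0 !hornerE0.
- rewrite zetanSSS /gamma; move: (zetan k.+2) (zetan k.+1) (zetan k) => P Q S.
  by case: ifP => _; rewrite !hornerE0 mulr0 mul0r addr0.
Qed.

Lemma horner0_zetan_double j :
  (zetan j.*2).[0] = \prod_(r <- zroots Cx j) ('X - r%:P) /\
  (zetan j.*2.+1).[0] = 'X * \prod_(r <- zroots Cx j) ('X - r%:P).
Proof.
have odd_step i : (zetan i.*2.+1).[0] = 'X * (zetan i.*2).[0].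
  by rewrite horner0_zetan odd_double subr0.
elim: j => [|j [IH0 _]]; first by rewrite zetan0 big_nil hornerE odd_step zetan0 hornerE.
suff e : (zetan j.+1.*2).[0] = \prod_(r <- zroots Cx j.+1) ('X - r%:P).
  by rewrite odd_step e.
rewrite doubleS horner0_zetan /= odd_double /= odd_step IH0 !big_cons /square_coef.
by rewrite rmorphN !rmorph_nat; ring.
Qed.

Lemma zend_horner_real (x : Rdefinitions.R) h :
  (zend 'X h).1.[x%:C] = (zend x h).1%:C /\ (zend 'X h).2.[x%:C] = (zend x h).2%:C.
Proof.
have [e1 e2] := zend_rmorph (horner_eval x%:C) 'X h.
have [f1 f2] := zend_rmorph (real_complex Rdefinitions.R) x h.
have hX : horner_eval x%:C 'X = x%:C := hornerX _.
split.
- by apply: (etrans e1); rewrite f1; congr (zend _ h).1; exact: hX.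
- by apply: (etrans e2); rewrite f2; congr (zend _ h).2; exact: hX.
Qed.

Lemma annJ_zend h :
  annJ h.*2.+1 (zetan h.*2) (zend 'X h).1 /\ annJ h.*2.+1 (zetan h.*2) (zend 'X h).2.
Proof.
by rewrite /annJ; have [-> ->] := zend_rmorph (@polyC {poly Cx}) 'X h;
  exact: zend_annihilates.
Qed.

Lemma zetan_double_inJ h : inJ h.*2.+1 (zetan h.*2).
Proof.
pose I := annJ h.*2.+1 (zetan h.*2).
suff : I 1 by rewrite /I /annJ polyC1 mul1r.
apply: (@ideal_prod_XsubC _ I (@annJB _ _) (@annJM _ _)
  (map (real_complex _) (0 :: zroots _ h))).
- move=> _ /mapP [x _ ->].
  have [I1 I2] := annJ_zend h.
  have [e1 e2] := zend_horner_real x h.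
  have := zend_neq0 x h; rewrite xpair_eqE negb_and => /orP [z1 | z2].
  + by exists (zend 'X h).1; rewrite // e1 (inj_eq (@complexI _)).
  + by exists (zend 'X h).2; rewrite // e2 (inj_eq (@complexI _)).
- rewrite mul1r /= big_cons rmorph0 subr0 map_zroots -(horner0_zetan_double h).2.
  apply: annJ_horner0; first exact: gamma_zetan_inJ.
  by apply: (inJ_comb2 (a := zetan h.*2) (b := 0) zetan_inJ inJ0); ring.
Qed.

Lemma gammaX_zetan_inJ h j d : (j + d)%N = h ->
  inJ h.*2.+1 (gamma ^+ d * zetan j.*2) /\ inJ h.*2.+1 (gamma ^+ d * zetan j.*2.+1).
Proof.
move=> hjd; have [N N_gt0 [hA hB _]] := zpair_congr hjd.
have z_in := zetan_double_inJ h.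
split; apply: (inJ_natrM N_gt0).
- by apply: (inJ_comb2 (a := 1) (b := (zpair alpha j d).2) hA z_in); ring.
- by apply: (inJ_comb2 (a := 1) (b := (zpair alpha j d).1) hB z_in); ring.
Qed.

Lemma gammaX_zeta_inJ h e (n : int) :
  n <= (h.*2.+1)%:Z -> (h.*2)%:Z <= (e.*2)%:Z + n -> inJ h.*2.+1 (gamma ^+ e * zeta n).
Proof.
case: n => [m|m] hm he; last by rewrite /= mulr0; apply: inJ0.
have [j em] : exists j, m = j.*2 \/ m = j.*2.+1.
  exists m./2; have := odd_double_half m.
  by case: (odd m) => em; [right|left]; rewrite ?add1n ?add0n in em; rewrite em.
have hjd : (j + (h - j))%N = h by move: hm he; case: em => ->; rewrite -!muln2; lia.
have de : (h - j <= e)%N by move: hm he; case: em => ->; rewrite -!muln2; lia.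
have [A B] := gammaX_zetan_inJ hjd.
rewrite -(subnK de) exprD -mulrA /=.
by apply: inJM; case: em => ->.
Qed.

Theorem lemma5p4 (g i : nat) (hg1 : (1 <= g)%N) (hgodd : odd g) :
  (exists u : CAG, unit_modJ g u /\
     congJ g (u * gamma ^+ i * zeta (g%:Z - 2 * i%:Z - 1))
             (gamma ^+ i.+1 * zeta (g%:Z - 2 * i%:Z - 2)))
  /\
  (exists v : CAG, unit_modJ g v /\
     congJ g (v * gamma ^+ i * zeta (g%:Z - 2 * i%:Z - 1))
             (gamma ^+ i.+1 * zeta (g%:Z - 2 * i%:Z - 3))).
Proof.
have [h ->] : exists h, g = h.*2.+1.
  by exists g./2; rewrite -[g in LHS]odd_double_half hgodd.
split; exists 1; split; rewrite ?mul1r; try exact: unit_modJ1;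
  by apply: congJ_inJ; apply: gammaX_zeta_inJ; rewrite -!muln2; lia.
Qed.
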